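(* Let $a>b>0$ and let $E$ be the ellipse $\frac{x^2}{a^2}+\frac{y^2}{b^2}=1$. Put $\delta=\sqrt{a^4-a^2b^2+b^4}$. Then for every 3-periodic billiard orbit (triangle) $P_1P_2P_3$ in $E$, the ratio of its inradius $r$ to its circumradius $R$ is the same, namely \[ \frac{r}{R}=\frac{2(\delta-b^2)(a^2-\delta)}{(a^2-b^2)^2}. \]
   Context: A 3-periodic billiard orbit in the ellipse $E$ is a nondegenerate triangle $P_1P_2P_3$ with all vertices on $E$ such that at each vertex $P_i$ the normal line to $E$ at $P_i$ bisects the interior angle of the triangle at $P_i$ (equal angles of incidence and reflection). These orbits form a one-parameter family (one through every point of $E$). The inradius and circumradius are the radii of the incircle and circumcircle of the triangle. *)

From Stdlib Require Import Reals Lra.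
Open Scope R_scope.

Definition pt := (R * R)%type.

Definition vsub (P Q : pt) : pt := (fst P - fst Q, snd P - snd Q).
Definition cross (u v : pt) : R := fst u * snd v - snd u * fst v.
Definition norm (u : pt) : R := sqrt (fst u ^ 2 + snd u ^ 2).
Definition dist (P Q : pt) : R := norm (vsub P Q).

Definition on_ellipse (a b : R) (P : pt) : Prop :=
  fst P ^ 2 / a ^ 2 + snd P ^ 2 / b ^ 2 = 1.

Definition ell_normal (a b : R) (P : pt) : pt := (fst P / a ^ 2, snd P / b ^ 2).

Definition nondegenerate (P1 P2 P3 : pt) : Prop :=
  cross (vsub P2 P1) (vsub P3 P1) <> 0.

Definition bisector_dir (P Q S : pt) : pt :=
  let u := vsub Q P in let v := vsub S P in
  (fst u / norm u + fst v / norm v, snd u / norm u + snd v / norm v).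

Definition normal_bisects (a b : R) (P Q S : pt) : Prop :=
  cross (ell_normal a b P) (bisector_dir P Q S) = 0.

Definition billiard3 (a b : R) (P1 P2 P3 : pt) : Prop :=
  nondegenerate P1 P2 P3 /\
  on_ellipse a b P1 /\ on_ellipse a b P2 /\ on_ellipse a b P3 /\
  normal_bisects a b P1 P2 P3 /\
  normal_bisects a b P2 P3 P1 /\
  normal_bisects a b P3 P1 P2.

Definition dist_line (X A B : pt) : R :=
  Rabs (cross (vsub B A) (vsub X A)) / norm (vsub B A).

Definition strictly_inside (X P1 P2 P3 : pt) : Prop :=
  (0 < cross (vsub P2 P1) (vsub X P1) /\ 0 < cross (vsub P3 P2) (vsub X P2) /\
   0 < cross (vsub P1 P3) (vsub X P3)) \/
  (cross (vsub P2 P1) (vsub X P1) < 0 /\ cross (vsub P3 P2) (vsub X P2) < 0 /\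
   cross (vsub P1 P3) (vsub X P3) < 0).

Definition is_inradius (P1 P2 P3 : pt) (r : R) : Prop :=
  exists I : pt, strictly_inside I P1 P2 P3 /\
    dist_line I P1 P2 = r /\ dist_line I P2 P3 = r /\ dist_line I P3 P1 = r.

Definition is_circumradius (P1 P2 P3 : pt) (Rc : R) : Prop :=
  exists O : pt, dist O P1 = Rc /\ dist O P2 = Rc /\ dist O P3 = Rc.

From Pilot Require Import Defs.
From Stdlib Require Import Reals Lra Psatz.
(* [dist] below is that of [Defs], not the metric-space one of [Reals]. *)
Import Defs.
Open Scope R_scope.

(* Write the vertices as [P_i = (a X_i, b Y_i)] with [(X_i, Y_i)] on the unit
   circle, and let [n_i] be the normal of the ellipse at [P_i]. The reflection
   law says that [n_i] has the same component along both unit side vectors at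
   [P_i]; this component is symmetric in the two endpoints of a side, so it is
   one number [J] for the whole orbit (Joachimsthal's integral), and
   [|n_i|^2 (1 + cos A_i) = 2 J^2]. With [K = J^2], [c = a^2 - b^2] and
   [s = a^2 + b^2], every side satisfies
   [(1 - K c) X_i X_j + (1 + K c) Y_i Y_j = 1 - K s]; three distinct points of
   the circle pairwise related in this way force [c^2 K^2 + 2 s K - 3 = 0],
   i.e. [c^2 K = 2 delta - s]. The Gram matrix of three plane vectors being
   singular, these relations also give [sum 1/|n_i|^2], hence
   [sum cos A_i = K s], and Carnot's theorem [r/R = sum cos A_i - 1] concludes. *)

(** * Plane vectors *)

Lemma pow2_pos (x : R) : x <> 0 -> 0 < x ^ 2.
Proof. intro H; rewrite <- Rsqr_pow2; apply Rsqr_pos_lt, H. Qed.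

Lemma pow2_eq0 (x : R) : x ^ 2 = 0 -> x = 0.
Proof. intro H; apply Rsqr_0_uniq; rewrite Rsqr_pow2; exact H. Qed.

Definition dot (u v : pt) : R := fst u * fst v + snd u * snd v.
Definition vadd (u v : pt) : pt := (fst u + fst v, snd u + snd v).
Definition unitv (u : pt) : pt := (fst u / norm u, snd u / norm u).
Definition cos_angle (P Q S : pt) : R := dot (unitv (vsub Q P)) (unitv (vsub S P)).

Lemma norm_sqr (u : pt) : norm u ^ 2 = dot u u.
Proof. unfold norm, dot; rewrite pow2_sqrt; [ring | nra]. Qed.

Lemma norm_pos (u : pt) : 0 < dot u u -> 0 < norm u.
Proof. intro H; apply sqrt_lt_R0; unfold dot in H; lra. Qed.

Lemma norm_vsub_sym (P Q : pt) : norm (vsub P Q) = norm (vsub Q P).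
Proof. unfold norm, vsub; simpl; f_equal; ring. Qed.

Lemma lagrange_identity (u v : pt) : cross u v ^ 2 + dot u v ^ 2 = dot u u * dot v v.
Proof. unfold cross, dot; ring. Qed.

Lemma dot_self_pos (u : pt) : u <> (0, 0) -> 0 < dot u u.
Proof.
destruct u as [x y]; unfold dot; simpl; intro H.
destruct (Req_dec x 0) as [-> | Hx].
- destruct (Req_dec y 0) as [-> | Hy]; [contradiction | nra].
- nra.
Qed.

Lemma cross_neq0_norm_pos (u v : pt) : cross u v <> 0 -> 0 < norm u /\ 0 < norm v.
Proof.
intro H; pose proof (lagrange_identity u v) as L.
assert (0 < cross u v ^ 2) by (apply pow2_pos, H).
assert (0 <= dot u v ^ 2) by apply pow2_ge_0.
assert (0 <= dot u u) by (unfold dot; nra). assert (0 <= dot v v) by (unfold dot; nra).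
split; apply norm_pos; nra.
Qed.

Lemma dot_unitv_r (n u : pt) : dot n (unitv u) = dot n u / norm u.
Proof. unfold dot, unitv, Rdiv; simpl; ring. Qed.

Lemma dot_unitv (u v : pt) : 0 < norm u -> 0 < norm v ->
  dot (unitv u) (unitv v) = dot u v / (norm u * norm v).
Proof. intros; unfold dot, unitv; simpl; field; lra. Qed.

Lemma unitv_unit (u : pt) : 0 < norm u -> dot (unitv u) (unitv u) = 1.
Proof.
intro H; transitivity (dot u u / norm u ^ 2).
- unfold dot, unitv; simpl; field; lra.
- rewrite <- norm_sqr; field; lra.
Qed.

Lemma cross_unitv (u v : pt) : 0 < norm u -> 0 < norm v ->
  cross (unitv u) (unitv v) = cross u v / (norm u * norm v).
Proof. intros; unfold cross, unitv; simpl; field; lra. Qed.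

(* [e + f] is orthogonal to [e - f], so a normal parallel to [e + f] has the
   same component along [e] and [f]. *)
Lemma bisector_unit_dot (n e f : pt) :
  dot e e = 1 -> dot f f = 1 -> cross e f <> 0 -> cross n (vadd e f) = 0 ->
  dot n e = dot n f /\ dot n n * (1 + dot e f) = 2 * dot n e ^ 2.
Proof.
destruct n as [nx ny], e as [ex ey], f as [fx fy].
unfold dot, cross, vadd; simpl; intros He Hf Hc Hb.
assert (Hs : (ex + fx) ^ 2 + (ey + fy) ^ 2 <> 0).
{ intro H0; apply Hc.
  assert (fx = - ex) by nra; assert (fy = - ey) by nra; subst; ring. }
assert (Hprod : ((ex + fx) ^ 2 + (ey + fy) ^ 2) * ((nx * ex + ny * ey) - (nx * fx + ny * fy)) = 0).
{ transitivity (((ex + fx) * (ex - fx) + (ey + fy) * (ey - fy)) * (nx * (ex + fx) + ny * (ey + fy))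
     - ((ex + fx) * (ey - fy) - (ey + fy) * (ex - fx)) * (nx * (ey + fy) - ny * (ex + fx))); [ring |].
  rewrite Hb; replace ((ex + fx) * (ex - fx) + (ey + fy) * (ey - fy)) with 0 by nra; ring. }
assert (Heq : nx * ex + ny * ey = nx * fx + ny * fy)
  by (destruct (Rmult_integral _ _ Hprod); [contradiction | lra]).
split; [exact Heq |].
transitivity (((nx * (ex + fx) + ny * (ey + fy)) ^ 2 + (nx * (ey + fy) - ny * (ex + fx)) ^ 2) / 2);
  [field_simplify; nra |].
rewrite Hb; replace (nx * (ex + fx) + ny * (ey + fy)) with (2 * (nx * ex + ny * ey)) by lra.
field.
Qed.

Lemma normal_bisector_angle (n P Q S : pt) :
  cross (vsub Q P) (vsub S P) <> 0 -> cross n (bisector_dir P Q S) = 0 ->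
  dot n (unitv (vsub Q P)) = dot n (unitv (vsub S P)) /\
  dot n n * (1 + cos_angle P Q S) = 2 * dot n (unitv (vsub Q P)) ^ 2.
Proof.
intros Hnd Hb; destruct (cross_neq0_norm_pos _ _ Hnd) as [HQ HS].
apply bisector_unit_dot; [apply unitv_unit, HQ | apply unitv_unit, HS | | exact Hb].
rewrite cross_unitv by assumption.
apply Rmult_integral_contrapositive_currified; [exact Hnd |].
apply Rinv_neq_0_compat; nra.
Qed.

(** * Carnot's theorem *)

Lemma dist_comm (P Q : pt) : dist P Q = dist Q P.
Proof. apply norm_vsub_sym. Qed.

Lemma dist_sqr (P Q : pt) : dist P Q ^ 2 = dot (vsub P Q) (vsub P Q).
Proof. apply norm_sqr. Qed.

Lemma dist_self (P : pt) : dist P P = 0.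
Proof. unfold dist, norm, vsub; cbn [fst snd]; rewrite <- sqrt_0; f_equal; ring. Qed.

Lemma cross_vsub_cycle (P Q S : pt) :
  cross (vsub Q P) (vsub S P) = cross (vsub S Q) (vsub P Q).
Proof. unfold cross, vsub; simpl; ring. Qed.

Lemma nondegenerate_cycle (P1 P2 P3 : pt) :
  nondegenerate P1 P2 P3 -> nondegenerate P2 P3 P1.
Proof. unfold nondegenerate; rewrite cross_vsub_cycle; auto. Qed.

Lemma nondegenerate_sides_pos (P1 P2 P3 : pt) : nondegenerate P1 P2 P3 ->
  0 < dist P2 P1 /\ 0 < dist P3 P2 /\ 0 < dist P1 P3.
Proof.
intro H; assert (H2 := nondegenerate_cycle _ _ _ H).
assert (H3 := nondegenerate_cycle _ _ _ H2).
destruct (cross_neq0_norm_pos _ _ H) as [H21 _].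
destruct (cross_neq0_norm_pos _ _ H2) as [H32 _].
destruct (cross_neq0_norm_pos _ _ H3) as [H13 _].
auto.
Qed.

Lemma nondegenerate_neq (P1 P2 P3 : pt) : nondegenerate P1 P2 P3 ->
  P1 <> P2 /\ P2 <> P3 /\ P1 <> P3.
Proof.
intro H; destruct (nondegenerate_sides_pos _ _ _ H) as (L1 & L2 & L3).
repeat split; intros ->; rewrite dist_self in *; lra.
Qed.

Lemma dot_vsub_polar (P Q S : pt) :
  dot (vsub Q P) (vsub S P) = (dist Q P ^ 2 + dist S P ^ 2 - dist S Q ^ 2) / 2.
Proof. rewrite !dist_sqr; unfold dot, vsub; simpl; field. Qed.

Lemma cos_angle_law (P Q S : pt) : 0 < dist Q P -> 0 < dist S P ->
  cos_angle P Q S = (dist Q P ^ 2 + dist S P ^ 2 - dist S Q ^ 2) / (2 * dist Q P * dist S P).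
Proof.
intros HQ HS; unfold cos_angle; rewrite dot_unitv, dot_vsub_polar by assumption.
unfold dist in *; field; split; lra.
Qed.

Lemma cross_sqr_sides (P Q S : pt) :
  cross (vsub Q P) (vsub S P) ^ 2 =
  dist Q P ^ 2 * dist P S ^ 2 - ((dist Q P ^ 2 + dist P S ^ 2 - dist S Q ^ 2) / 2) ^ 2.
Proof.
rewrite (dist_comm P S), <- dot_vsub_polar, !dist_sqr, <- lagrange_identity; ring.
Qed.

(* The signed areas of [I P1 P2], [I P2 P3], [I P3 P1] add up to that of the
   triangle and, [I] being inside, all have its sign. *)
Lemma inradius_mul_perimeter (P1 P2 P3 : pt) (r : R) :
  nondegenerate P1 P2 P3 -> is_inradius P1 P2 P3 r ->
  r * (dist P2 P1 + dist P3 P2 + dist P1 P3) = Rabs (cross (vsub P2 P1) (vsub P3 P1)).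
Proof.
intros Hnd (I & Hin & d1 & d2 & d3).
destruct (nondegenerate_sides_pos _ _ _ Hnd) as (L1 & L2 & L3).
unfold dist_line, strictly_inside in *.
assert (Hsum : cross (vsub P2 P1) (vsub P3 P1) = cross (vsub P2 P1) (vsub I P1)
          + cross (vsub P3 P2) (vsub I P2) + cross (vsub P1 P3) (vsub I P3))
  by (unfold cross, vsub; simpl; ring).
assert (a1 : Rabs (cross (vsub P2 P1) (vsub I P1)) = r * dist P2 P1)
  by (rewrite <- d1; unfold dist in *; field; lra).
assert (a2 : Rabs (cross (vsub P3 P2) (vsub I P2)) = r * dist P3 P2)
  by (rewrite <- d2; unfold dist in *; field; lra).
assert (a3 : Rabs (cross (vsub P1 P3) (vsub I P3)) = r * dist P1 P3)
  by (rewrite <- d3; unfold dist in *; field; lra).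
rewrite Hsum.
destruct Hin as [(p1 & p2 & p3) | (p1 & p2 & p3)].
- rewrite Rabs_pos_eq in a1, a2, a3 by lra; rewrite Rabs_pos_eq; lra.
- rewrite Rabs_left in a1, a2, a3 by lra; rewrite Rabs_left; lra.
Qed.

(* With [p = O - P1] and side vectors [u], [v] from [P1]: [2 p.u = |u|^2],
   [2 p.v = |v|^2], and [cross u v * p] is determined by [p.u] and [p.v]. *)
Lemma circumradius_sqr_cross (P1 P2 P3 : pt) (Rc : R) : is_circumradius P1 P2 P3 Rc ->
  4 * Rc ^ 2 * cross (vsub P2 P1) (vsub P3 P1) ^ 2 = (dist P2 P1 * dist P3 P2 * dist P1 P3) ^ 2.
Proof.
intros (O & e1 & e2 & e3).
assert (h1 := dist_sqr O P1); assert (h2 := dist_sqr O P2); assert (h3 := dist_sqr O P3).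
rewrite e1 in h1; rewrite e2 in h2; rewrite e3 in h3.
rewrite !Rpow_mult_distr, !dist_sqr.
destruct O as [ox oy], P1 as [x1 y1], P2 as [x2 y2], P3 as [x3 y3].
unfold dot, cross, vsub in *; cbn [fst snd] in *.
set (pu := (ox - x1) * (x2 - x1) + (oy - y1) * (y2 - y1)).
set (pv := (ox - x1) * (x3 - x1) + (oy - y1) * (y3 - y1)).
assert (I : ((x2 - x1) * (y3 - y1) - (y2 - y1) * (x3 - x1)) ^ 2 * Rc ^ 2
  = (pu * (x3 - x1) - pv * (x2 - x1)) ^ 2 + (pu * (y3 - y1) - pv * (y2 - y1)) ^ 2)
  by (rewrite h1; unfold pu, pv; ring).
replace pu with (((x2 - x1) * (x2 - x1) + (y2 - y1) * (y2 - y1)) / 2) in I by (unfold pu; lra).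
replace pv with (((x3 - x1) * (x3 - x1) + (y3 - y1) * (y3 - y1)) / 2) in I by (unfold pv; lra).
transitivity (4 * (((x2 - x1) * (y3 - y1) - (y2 - y1) * (x3 - x1)) ^ 2 * Rc ^ 2)); [ring |].
rewrite I; field.
Qed.

Lemma circumradius_mul_cross (P1 P2 P3 : pt) (Rc : R) : is_circumradius P1 P2 P3 Rc ->
  2 * Rc * Rabs (cross (vsub P2 P1) (vsub P3 P1)) = dist P2 P1 * dist P3 P2 * dist P1 P3.
Proof.
intro HR; assert (Hsq := circumradius_sqr_cross _ _ _ _ HR).
assert (HRc : 0 <= Rc) by (destruct HR as (O & <- & _); apply sqrt_pos).
assert (0 <= dist P2 P1 * dist P3 P2 * dist P1 P3)
  by (unfold dist, norm; repeat apply Rmult_le_pos; apply sqrt_pos).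
assert (0 <= 2 * Rc * Rabs (cross (vsub P2 P1) (vsub P3 P1)))
  by (apply Rmult_le_pos; [lra | apply Rabs_pos]).
rewrite <- (pow2_abs (cross _ _)) in Hsq; nra.
Qed.

Lemma cos_angle_sum_sides (A B C : R) : 0 < A -> 0 < B -> 0 < C ->
  (C ^ 2 + B ^ 2 - A ^ 2) / (2 * C * B) + (A ^ 2 + C ^ 2 - B ^ 2) / (2 * A * C)
  + (B ^ 2 + A ^ 2 - C ^ 2) / (2 * B * A) - 1
  = 2 * (C ^ 2 * B ^ 2 - ((C ^ 2 + B ^ 2 - A ^ 2) / 2) ^ 2) / ((A + B + C) * (A * B * C)).
Proof. intros; field; lra. Qed.

Theorem carnot (P1 P2 P3 : pt) (r Rc : R) : nondegenerate P1 P2 P3 ->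
  is_inradius P1 P2 P3 r -> is_circumradius P1 P2 P3 Rc ->
  r / Rc = cos_angle P1 P2 P3 + cos_angle P2 P3 P1 + cos_angle P3 P1 P2 - 1.
Proof.
intros Hnd Hr HR.
assert (Hin := inradius_mul_perimeter _ _ _ _ Hnd Hr).
assert (Hcirc := circumradius_mul_cross _ _ _ _ HR).
assert (Hcr : 0 < Rabs (cross (vsub P2 P1) (vsub P3 P1))) by (apply Rabs_pos_lt, Hnd).
destruct (nondegenerate_sides_pos _ _ _ Hnd) as (L1 & L2 & L3).
assert (L3' : 0 < dist P3 P1) by (rewrite dist_comm; exact L3).
assert (L1' : 0 < dist P1 P2) by (rewrite dist_comm; exact L1).
assert (L2' : 0 < dist P2 P3) by (rewrite dist_comm; exact L2).
rewrite (cos_angle_law P1 P2 P3 L1 L3'), (cos_angle_law P2 P3 P1 L2 L1'),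
  (cos_angle_law P3 P1 P2 L3 L2').
rewrite (dist_comm P3 P1), (dist_comm P1 P2), (dist_comm P2 P3), cos_angle_sum_sides by assumption.
rewrite <- cross_sqr_sides, <- pow2_abs.
replace r with (Rabs (cross (vsub P2 P1) (vsub P3 P1)) / (dist P2 P1 + dist P3 P2 + dist P1 P3))
  by (rewrite <- Hin; field; lra).
replace Rc with (dist P2 P1 * dist P3 P2 * dist P1 P3 / (2 * Rabs (cross (vsub P2 P1) (vsub P3 P1))))
  by (rewrite <- Hcirc; field; lra).
field; repeat split; lra.
Qed.

(** * Joachimsthal's integral *)

Definition ell_pt (a b : R) (u : pt) : pt := (a * fst u, b * snd u).

Lemma on_ellipse_ell_pt (a b : R) (P : pt) : a <> 0 -> b <> 0 -> on_ellipse a b P ->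
  exists u, dot u u = 1 /\ P = ell_pt a b u.
Proof.
intros ha hb H; exists (fst P / a, snd P / b).
destruct P as [x y]; unfold on_ellipse, dot, ell_pt in *; simpl in *.
split; [rewrite <- H; field | f_equal; field]; auto.
Qed.

Lemma ell_pt_on_ellipse (a b : R) (u : pt) : a <> 0 -> b <> 0 -> dot u u = 1 ->
  on_ellipse a b (ell_pt a b u).
Proof.
intros ha hb H; unfold on_ellipse, ell_pt, dot in *; cbn [fst snd]; rewrite <- H.
field; auto.
Qed.

Lemma ell_normal_dot_vsub (a b : R) (P Q : pt) : on_ellipse a b P ->
  dot (ell_normal a b P) (vsub Q P) = fst P * fst Q / a ^ 2 + snd P * snd Q / b ^ 2 - 1.
Proof. intro H; rewrite <- H; unfold dot, ell_normal, vsub, Rdiv; simpl; ring. Qed.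

Lemma ell_normal_sqr_pos (a b : R) (P : pt) : on_ellipse a b P ->
  0 < dot (ell_normal a b P) (ell_normal a b P).
Proof.
destruct P as [x y]; unfold on_ellipse, ell_normal, dot; cbn [fst snd]; intro H.
replace (x ^ 2 / a ^ 2 + y ^ 2 / b ^ 2) with (x * (x / a ^ 2) + y * (y / b ^ 2)) in H
  by (unfold Rdiv; ring).
set (n1 := x / a ^ 2) in *; set (n2 := y / b ^ 2) in *.
apply Rnot_le_lt; intro Hle.
assert (Hn1 : n1 = 0) by nra; assert (Hn2 : n2 = 0) by nra.
rewrite Hn1, Hn2 in H; lra.
Qed.

Definition joachimsthal (a b : R) (P Q : pt) : R := dot (ell_normal a b P) (unitv (vsub Q P)).

Lemma joachimsthal_comm (a b : R) (P Q : pt) : on_ellipse a b P -> on_ellipse a b Q ->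
  joachimsthal a b P Q = joachimsthal a b Q P.
Proof.
intros HP HQ; unfold joachimsthal.
rewrite !dot_unitv_r, !ell_normal_dot_vsub, norm_vsub_sym by assumption.
unfold Rdiv; ring.
Qed.

Lemma billiard3_joachimsthal (a b : R) (P1 P2 P3 : pt) : billiard3 a b P1 P2 P3 ->
  joachimsthal a b P1 P2 = joachimsthal a b P2 P3 /\
  joachimsthal a b P1 P3 = joachimsthal a b P2 P3.
Proof.
intros (Hnd & E1 & E2 & E3 & _ & B2 & B3).
assert (Hnd2 := nondegenerate_cycle _ _ _ Hnd).
assert (Hnd3 := nondegenerate_cycle _ _ _ Hnd2).
destruct (normal_bisector_angle _ _ _ _ Hnd2 B2) as [J2 _].
destruct (normal_bisector_angle _ _ _ _ Hnd3 B3) as [J3 _].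
fold (joachimsthal a b P2 P3) (joachimsthal a b P2 P1) in J2.
fold (joachimsthal a b P3 P1) (joachimsthal a b P3 P2) in J3.
split.
- rewrite (joachimsthal_comm a b P1 P2) by assumption; symmetry; exact J2.
- rewrite (joachimsthal_comm a b P1 P3), J3 by assumption; apply joachimsthal_comm; assumption.
Qed.

Lemma billiard3_angles (a b : R) (P1 P2 P3 : pt) : billiard3 a b P1 P2 P3 ->
  let K := joachimsthal a b P2 P3 ^ 2 in
  dot (ell_normal a b P1) (ell_normal a b P1) * (1 + cos_angle P1 P2 P3) = 2 * K /\
  dot (ell_normal a b P2) (ell_normal a b P2) * (1 + cos_angle P2 P3 P1) = 2 * K /\
  dot (ell_normal a b P3) (ell_normal a b P3) * (1 + cos_angle P3 P1 P2) = 2 * K.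
Proof.
intros Horbit K.
destruct (billiard3_joachimsthal _ _ _ _ _ Horbit) as [J12 J13].
destruct Horbit as (Hnd & E1 & E2 & E3 & B1 & B2 & B3).
assert (Hnd2 := nondegenerate_cycle _ _ _ Hnd).
assert (Hnd3 := nondegenerate_cycle _ _ _ Hnd2).
destruct (normal_bisector_angle _ _ _ _ Hnd B1) as [_ A1].
destruct (normal_bisector_angle _ _ _ _ Hnd2 B2) as [_ A2].
destruct (normal_bisector_angle _ _ _ _ Hnd3 B3) as [_ A3].
fold (joachimsthal a b P1 P2) in A1; fold (joachimsthal a b P2 P3) in A2;
  fold (joachimsthal a b P3 P1) in A3.
rewrite J12 in A1; rewrite joachimsthal_comm, J13 in A3 by assumption.
auto.
Qed.

Definition diag_form (al be : R) (u v : pt) : R := al * (fst u * fst v) + be * (snd u * snd v).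

Lemma unit_dot_lt1 (u v : pt) : dot u u = 1 -> dot v v = 1 -> u <> v -> dot u v < 1.
Proof.
intros Hu Hv Huv.
assert (H : 0 < dot (vsub u v) (vsub u v)).
{ apply dot_self_pos; destruct u as [x1 y1], v as [x2 y2]; unfold vsub; cbn [fst snd].
  intro e; injection e; intros; apply Huv; f_equal; lra. }
replace (dot (vsub u v) (vsub u v)) with (dot u u + dot v v - 2 * dot u v) in H
  by (unfold dot, vsub; cbn [fst snd]; ring).
lra.
Qed.

Lemma ell_chord_sqr (a b : R) (u v : pt) : dot u u = 1 -> dot v v = 1 ->
  dist (ell_pt a b v) (ell_pt a b u) ^ 2 =
  (1 - dot u v) * ((a ^ 2 + b ^ 2) - (a ^ 2 - b ^ 2) * (fst u * fst v - snd u * snd v)).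
Proof.
intros Hu Hv; rewrite dist_sqr.
destruct u as [x1 y1], v as [x2 y2]; unfold dot, ell_pt, vsub in *; cbn [fst snd] in *.
transitivity ((1 - (x1 * x2 + y1 * y2)) * ((a ^ 2 + b ^ 2) - (a ^ 2 - b ^ 2) * (x1 * x2 - y1 * y2))
  + (b ^ 2 * x2 ^ 2 + a ^ 2 - a ^ 2 * x2 ^ 2) * (x1 * x1 + y1 * y1 - 1)
  + (b ^ 2 - b ^ 2 * y1 ^ 2 + a ^ 2 * y1 ^ 2) * (x2 * x2 + y2 * y2 - 1)); [ring |].
rewrite Hu, Hv; ring.
Qed.

Lemma joachimsthal_chord (a b : R) (u v : pt) : a <> 0 -> b <> 0 ->
  dot u u = 1 -> dot v v = 1 -> ell_pt a b u <> ell_pt a b v ->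
  let K := joachimsthal a b (ell_pt a b u) (ell_pt a b v) ^ 2 in
  diag_form (1 - K * (a ^ 2 - b ^ 2)) (1 + K * (a ^ 2 - b ^ 2)) u v = 1 - K * (a ^ 2 + b ^ 2).
Proof.
intros ha hb Hu Hv Hne K.
assert (HL : 0 < dist (ell_pt a b v) (ell_pt a b u)).
{ apply norm_pos, dot_self_pos; destruct u as [x1 y1], v as [x2 y2].
  unfold ell_pt, vsub; cbn [fst snd]; intro e; injection e; intros; apply Hne.
  unfold ell_pt; cbn [fst snd]; f_equal; lra. }
assert (HB : dot u v < 1) by (apply unit_dot_lt1; auto; intros ->; auto).
assert (Hsq := ell_chord_sqr a b u v Hu Hv).
set (f := fst u * fst v - snd u * snd v) in Hsq.
assert (Hs : 0 < (a ^ 2 + b ^ 2) - (a ^ 2 - b ^ 2) * f).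
{ assert (0 < dist (ell_pt a b v) (ell_pt a b u) ^ 2) by (apply pow_lt, HL). nra. }
assert (HK : K = (1 - dot u v) / ((a ^ 2 + b ^ 2) - (a ^ 2 - b ^ 2) * f)).
{ unfold K, joachimsthal; rewrite dot_unitv_r, ell_normal_dot_vsub by (apply ell_pt_on_ellipse; auto).
  change (norm (vsub (ell_pt a b v) (ell_pt a b u))) with (dist (ell_pt a b v) (ell_pt a b u)).
  unfold Rdiv at 1; rewrite Rpow_mult_distr, pow_inv, Hsq.
  unfold ell_pt, dot in *; cbn [fst snd]; field; repeat split; auto; lra. }
rewrite HK; unfold diag_form, f, dot in *; field; lra.
Qed.

Lemma billiard3_chords (a b : R) (u1 u2 u3 : pt) : a <> 0 -> b <> 0 ->
  dot u1 u1 = 1 -> dot u2 u2 = 1 -> dot u3 u3 = 1 ->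
  billiard3 a b (ell_pt a b u1) (ell_pt a b u2) (ell_pt a b u3) ->
  let K := joachimsthal a b (ell_pt a b u2) (ell_pt a b u3) ^ 2 in
  let form := diag_form (1 - K * (a ^ 2 - b ^ 2)) (1 + K * (a ^ 2 - b ^ 2)) in
  form u1 u2 = 1 - K * (a ^ 2 + b ^ 2) /\ form u1 u3 = 1 - K * (a ^ 2 + b ^ 2) /\
  form u2 u3 = 1 - K * (a ^ 2 + b ^ 2).
Proof.
intros ha hb U1 U2 U3 Horbit K form.
destruct (billiard3_joachimsthal _ _ _ _ _ Horbit) as [J12 J13].
destruct (nondegenerate_neq _ _ _ (proj1 Horbit)) as (N12 & N23 & N13).
assert (F12 := joachimsthal_chord a b u1 u2 ha hb U1 U2 N12).
assert (F13 := joachimsthal_chord a b u1 u3 ha hb U1 U3 N13).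
assert (F23 := joachimsthal_chord a b u2 u3 ha hb U2 U3 N23).
cbv zeta in F12, F13, F23; rewrite J12 in F12; rewrite J13 in F13.
auto.
Qed.

(** * Closing the orbit *)

(* [t] is [cross w u]; the two points of the line [w.x = g] on the unit
   circle are reflections of each other in the foot of the perpendicular. *)
Lemma line_unit_circle_meet (w u v : pt) (g : R) :
  dot u u = 1 -> dot v v = 1 -> u <> v -> dot w u = g -> dot w v = g ->
  exists t, dot w w = g ^ 2 + t ^ 2 /\
    dot w w * fst u = g * fst w - t * snd w /\ dot w w * snd u = g * snd w + t * fst w /\
    dot w w * fst v = g * fst w + t * snd w /\ dot w w * snd v = g * snd w - t * fst w.
Proof.
destruct w as [w1 w2], u as [x2 y2], v as [x3 y3]; unfold dot; cbn [fst snd].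
intros Hu Hv Huv Hwu Hwv.
set (p := w1 * w1 + w2 * w2); set (t := w1 * y2 - w2 * x2); set (t' := w1 * y3 - w2 * x3).
assert (Ht : p = g ^ 2 + t ^ 2)
  by (rewrite <- Hwu; transitivity (p * (x2 * x2 + y2 * y2)); [rewrite Hu | unfold p, t]; ring).
assert (Ht' : p = g ^ 2 + t' ^ 2)
  by (rewrite <- Hwv; transitivity (p * (x3 * x3 + y3 * y3)); [rewrite Hv | unfold p, t']; ring).
assert (X2 : p * x2 = g * w1 - t * w2) by (rewrite <- Hwu; unfold p, t; ring).
assert (Y2 : p * y2 = g * w2 + t * w1) by (rewrite <- Hwu; unfold p, t; ring).
assert (X3 : p * x3 = g * w1 - t' * w2) by (rewrite <- Hwv; unfold p, t'; ring).
assert (Y3 : p * y3 = g * w2 + t' * w1) by (rewrite <- Hwv; unfold p, t'; ring).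
assert (Hopp : t' = - t).
{ assert (Hprod : (t' - t) * (t' + t) = 0) by nra.
  destruct (Rmult_integral _ _ Hprod) as [He | He]; [| lra].
  destruct (Req_dec p 0) as [Hp | Hp]; [nra |].
  exfalso; apply Huv; f_equal; apply (Rmult_eq_reg_l p); auto;
    rewrite ?X2, ?X3, ?Y2, ?Y3; replace t' with t by lra; reflexivity. }
rewrite Hopp in X3, Y3.
exists t; repeat split; [exact Ht | exact X2 | exact Y2 | rewrite X3 | rewrite Y3]; ring.
Qed.

(* The relation [form u2 u3 = ga], times [p^2], for the two points [u2], [u3]
   that [line_unit_circle_meet] gives for [w = (al x, be y)]. *)
Lemma three_chord_polynomial (K c s x y t : R) : x ^ 2 + y ^ 2 = 1 ->
  let al := 1 - K * c in let be := 1 + K * c in let ga := 1 - K * s in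
  let p := al ^ 2 * x ^ 2 + be ^ 2 * y ^ 2 in
  p = ga ^ 2 + t ^ 2 ->
  al * ((ga * (al * x) - t * (be * y)) * (ga * (al * x) + t * (be * y)))
  + be * ((ga * (be * y) + t * (al * x)) * (ga * (be * y) - t * (al * x))) - ga * p ^ 2
  = (K ^ 2 * c ^ 2 + 2 * K * s - 3) * K * (s - c * (x ^ 2 - y ^ 2)) * p.
Proof.
intros Hxy al be ga p Ht.
transitivity (al * (ga ^ 2 * al ^ 2 * x ^ 2 - t ^ 2 * be ^ 2 * y ^ 2)
  + be * (ga ^ 2 * be ^ 2 * y ^ 2 - t ^ 2 * al ^ 2 * x ^ 2) - ga * p ^ 2); [ring |].
replace (t ^ 2) with (p - ga ^ 2) by lra.
unfold p, al, be, ga; replace (x ^ 2) with (1 - y ^ 2) by lra; ring.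
Qed.

Lemma three_chord_closure (K c s : R) (u1 u2 u3 : pt) : 0 < c -> c < s -> 0 <= K ->
  dot u1 u1 = 1 -> dot u2 u2 = 1 -> dot u3 u3 = 1 -> u1 <> u2 -> u2 <> u3 ->
  diag_form (1 - K * c) (1 + K * c) u1 u2 = 1 - K * s ->
  diag_form (1 - K * c) (1 + K * c) u1 u3 = 1 - K * s ->
  diag_form (1 - K * c) (1 + K * c) u2 u3 = 1 - K * s ->
  K ^ 2 * c ^ 2 + 2 * K * s - 3 = 0.
Proof.
intros Hc Hs HK U1 U2 U3 N12 N23 F12 F13 F23.
set (w := ((1 - K * c) * fst u1, (1 + K * c) * snd u1)).
assert (Hw : forall v, diag_form (1 - K * c) (1 + K * c) u1 v = dot w v)
  by (intro; unfold diag_form, dot, w; cbn [fst snd]; ring).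
rewrite Hw in F12, F13.
destruct (line_unit_circle_meet w u2 u3 (1 - K * s) U2 U3 N23 F12 F13)
  as (t & Ht & X2 & Y2 & X3 & Y3).
assert (Hp : dot w w = (1 - K * c) ^ 2 * fst u1 ^ 2 + (1 + K * c) ^ 2 * snd u1 ^ 2)
  by (unfold dot, w; cbn [fst snd]; ring).
assert (E : dot w w ^ 2 * diag_form (1 - K * c) (1 + K * c) u2 u3 =
  (1 - K * c) * ((dot w w * fst u2) * (dot w w * fst u3))
  + (1 + K * c) * ((dot w w * snd u2) * (dot w w * snd u3))) by (unfold diag_form; ring).
rewrite F23, X2, Y2, X3, Y3 in E.
rewrite Hp in Ht, E; unfold w in E; cbn [fst snd] in E.
assert (P := three_chord_polynomial K c s (fst u1) (snd u1) t ltac:(unfold dot in U1; lra) Ht).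
cbv zeta in P; rewrite <- E in P.
rewrite <- Hp in P.
assert (Hfac : (K ^ 2 * c ^ 2 + 2 * K * s - 3) * K * (s - c * (fst u1 ^ 2 - snd u1 ^ 2)) * dot w w = 0)
  by (rewrite <- P; ring).
unfold dot in U1.
assert (HK0 : K <> 0).
{ intros ->; apply (unit_dot_lt1 u1 u2) in N12; auto.
  rewrite <- Hw in F12; unfold diag_form, dot in *; lra. }
assert (Hquad : 0 < s - c * (fst u1 ^ 2 - snd u1 ^ 2)) by nra.
assert (Hpos : 0 < dot w w).
{ rewrite Hp; apply Rnot_le_lt; intro Hle.
  assert (Hb : 0 < (1 + K * c) ^ 2) by (apply pow_lt; nra).
  assert (T1 := pow2_ge_0 (fst u1)); assert (T2 := pow2_ge_0 (snd u1)).
  assert (T3 := pow2_ge_0 (1 - K * c)).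
  assert (Hy : snd u1 = 0) by (apply pow2_eq0; nra).
  assert (Hal : 1 - K * c = 0) by (apply pow2_eq0; rewrite Hy in U1; nra).
  rewrite <- Hw in F12; unfold diag_form in F12; rewrite Hal, Hy in F12.
  assert (K * (s - c) = 0) by lra; nra. }
repeat (apply Rmult_integral in Hfac; destruct Hfac as [Hfac | Hfac]); auto; lra.
Qed.

(* Three vectors of the plane have a singular Gram matrix. *)
Lemma diag_form_gram (al be g d1 d2 d3 : R) (u1 u2 u3 : pt) :
  diag_form al be u1 u2 = g -> diag_form al be u1 u3 = g -> diag_form al be u2 u3 = g ->
  diag_form al be u1 u1 = g + d1 -> diag_form al be u2 u2 = g + d2 ->
  diag_form al be u3 u3 = g + d3 ->
  d1 * d2 * d3 + g * (d1 * d2 + d1 * d3 + d2 * d3) = 0.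
Proof.
intros F12 F13 F23 F11 F22 F33.
assert (Hdet : diag_form al be u1 u1 * diag_form al be u2 u2 * diag_form al be u3 u3
  + 2 * diag_form al be u1 u2 * diag_form al be u1 u3 * diag_form al be u2 u3
  - diag_form al be u1 u1 * diag_form al be u2 u3 ^ 2
  - diag_form al be u2 u2 * diag_form al be u1 u3 ^ 2
  - diag_form al be u3 u3 * diag_form al be u1 u2 ^ 2 = 0) by (unfold diag_form; ring).
rewrite F12, F13, F23, F11, F22, F33 in Hdet.
rewrite <- Hdet; ring.
Qed.

Lemma ell_diag_form_self (a b K : R) (u : pt) : a <> 0 -> b <> 0 -> dot u u = 1 ->
  diag_form (1 - K * (a ^ 2 - b ^ 2)) (1 + K * (a ^ 2 - b ^ 2)) u u =
  (1 - K * (a ^ 2 + b ^ 2))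
  + 2 * K * a ^ 2 * b ^ 2 * dot (ell_normal a b (ell_pt a b u)) (ell_normal a b (ell_pt a b u)).
Proof.
intros ha hb Hu.
transitivity ((1 - K * (a ^ 2 + b ^ 2)) * dot u u
  + 2 * K * a ^ 2 * b ^ 2 * dot (ell_normal a b (ell_pt a b u)) (ell_normal a b (ell_pt a b u))).
- unfold diag_form, dot, ell_normal, ell_pt; cbn [fst snd]; field; auto.
- rewrite Hu; ring.
Qed.

Lemma inv_sum_of_gram (a b K N1 N2 N3 : R) : 0 < b -> b < a -> 0 <= K ->
  0 < N1 -> 0 < N2 -> 0 < N3 ->
  K ^ 2 * (a ^ 2 - b ^ 2) ^ 2 + 2 * K * (a ^ 2 + b ^ 2) - 3 = 0 ->
  let g := 1 - K * (a ^ 2 + b ^ 2) in let W := 2 * K * a ^ 2 * b ^ 2 in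
  (W * N1) * (W * N2) * (W * N3)
  + g * ((W * N1) * (W * N2) + (W * N1) * (W * N3) + (W * N2) * (W * N3)) = 0 ->
  (2 * K / N1 - 1) + (2 * K / N2 - 1) + (2 * K / N3 - 1) - 1 = K * (a ^ 2 + b ^ 2) - 1.
Proof.
intros hb hab HK0 H1 H2 H3 HF g W Hgram.
assert (HK : 0 < K) by (destruct HK0 as [| <-]; [auto | lra]).
assert (HW : 0 < W) by (unfold W; assert (0 < a ^ 2 * b ^ 2) by (apply Rmult_lt_0_compat; nra); nra).
assert (Hsym : W * N1 * N2 * N3 + g * (N1 * N2 + N1 * N3 + N2 * N3) = 0).
{ apply (Rmult_eq_reg_l (W ^ 2)); [rewrite Rmult_0_r, <- Hgram; ring | nra]. }
assert (Hg : g <> 0).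
{ intro e; rewrite e in Hsym.
  assert (0 < W * N1 * N2 * N3) by (apply Rmult_lt_0_compat; [apply Rmult_lt_0_compat; [apply Rmult_lt_0_compat |] |]; auto). lra. }
assert (HN : 0 < N1 * N2 * N3) by (apply Rmult_lt_0_compat; [apply Rmult_lt_0_compat |]; auto).
apply (Rmult_eq_reg_r (g * (N1 * N2 * N3))); [| apply Rmult_integral_contrapositive_currified; lra].
transitivity (2 * K * (g * (N1 * N2 + N1 * N3 + N2 * N3)) - 4 * g * (N1 * N2 * N3));
  [field; lra |].
replace (g * (N1 * N2 + N1 * N3 + N2 * N3)) with (- (W * N1 * N2 * N3)) by lra.
apply Rminus_diag_uniq; unfold g, W.
transitivity ((N1 * N2 * N3) * (K ^ 2 * (a ^ 2 - b ^ 2) ^ 2 + 2 * K * (a ^ 2 + b ^ 2) - 3));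
  [ring | rewrite HF; ring].
Qed.

(* [K] is the nonnegative root, so [(a^2 - b^2)^2 K = 2 delta - (a^2 + b^2)]. *)
Lemma joachimsthal_sqr_closed_form (a b K : R) : 0 < b -> b < a -> 0 <= K ->
  K ^ 2 * (a ^ 2 - b ^ 2) ^ 2 + 2 * K * (a ^ 2 + b ^ 2) - 3 = 0 ->
  K * (a ^ 2 + b ^ 2) - 1 =
  2 * (sqrt (a ^ 4 - a ^ 2 * b ^ 2 + b ^ 4) - b ^ 2)
    * (a ^ 2 - sqrt (a ^ 4 - a ^ 2 * b ^ 2 + b ^ 4)) / (a ^ 2 - b ^ 2) ^ 2.
Proof.
intros hb hab HK HF.
assert (Hc : 0 < a ^ 2 - b ^ 2) by nra.
assert (Hdelta : sqrt (a ^ 4 - a ^ 2 * b ^ 2 + b ^ 4) = ((a ^ 2 - b ^ 2) ^ 2 * K + (a ^ 2 + b ^ 2)) / 2).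
{ rewrite <- (sqrt_pow2 (((a ^ 2 - b ^ 2) ^ 2 * K + (a ^ 2 + b ^ 2)) / 2)).
  - f_equal; nra.
  - assert (0 <= (a ^ 2 - b ^ 2) ^ 2 * K) by (apply Rmult_le_pos; [apply pow2_ge_0 | lra]); nra. }
rewrite Hdelta; transitivity ((1 - K ^ 2 * (a ^ 2 - b ^ 2) ^ 2) / 2); [lra | field; lra].
Qed.

Lemma billiard3_cos_angle_sum (a b : R) (u1 u2 u3 : pt) : 0 < b -> b < a ->
  dot u1 u1 = 1 -> dot u2 u2 = 1 -> dot u3 u3 = 1 ->
  billiard3 a b (ell_pt a b u1) (ell_pt a b u2) (ell_pt a b u3) ->
  exists K, 0 <= K /\ K ^ 2 * (a ^ 2 - b ^ 2) ^ 2 + 2 * K * (a ^ 2 + b ^ 2) - 3 = 0 /\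
    cos_angle (ell_pt a b u1) (ell_pt a b u2) (ell_pt a b u3)
    + cos_angle (ell_pt a b u2) (ell_pt a b u3) (ell_pt a b u1)
    + cos_angle (ell_pt a b u3) (ell_pt a b u1) (ell_pt a b u2) - 1 = K * (a ^ 2 + b ^ 2) - 1.
Proof.
intros hb hab U1 U2 U3 Horbit.
assert (ha : a <> 0) by lra; assert (hb0 : b <> 0) by lra.
destruct (billiard3_chords a b u1 u2 u3 ha hb0 U1 U2 U3 Horbit) as (F12 & F13 & F23).
destruct (billiard3_angles _ _ _ _ _ Horbit) as (A1 & A2 & A3).
destruct Horbit as (Hnd & E1 & E2 & E3 & _).
destruct (nondegenerate_neq _ _ _ Hnd) as (N12 & N23 & _).
set (K := joachimsthal a b (ell_pt a b u2) (ell_pt a b u3) ^ 2) in *.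
assert (HK : 0 <= K) by apply pow2_ge_0.
assert (HF : K ^ 2 * (a ^ 2 - b ^ 2) ^ 2 + 2 * K * (a ^ 2 + b ^ 2) - 3 = 0).
{ apply (three_chord_closure K _ _ u1 u2 u3); auto; try nra; intros ->; auto. }
exists K; split; [exact HK | split; [exact HF |]].
assert (Hn1 := ell_normal_sqr_pos _ _ _ E1); assert (Hn2 := ell_normal_sqr_pos _ _ _ E2);
  assert (Hn3 := ell_normal_sqr_pos _ _ _ E3).
set (N1 := dot (ell_normal a b (ell_pt a b u1)) (ell_normal a b (ell_pt a b u1))) in *.
set (N2 := dot (ell_normal a b (ell_pt a b u2)) (ell_normal a b (ell_pt a b u2))) in *.
set (N3 := dot (ell_normal a b (ell_pt a b u3)) (ell_normal a b (ell_pt a b u3))) in *.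
replace (cos_angle (ell_pt a b u1) _ _) with (2 * K / N1 - 1) by (rewrite <- A1; field; lra).
replace (cos_angle (ell_pt a b u2) _ _) with (2 * K / N2 - 1) by (rewrite <- A2; field; lra).
replace (cos_angle (ell_pt a b u3) _ _) with (2 * K / N3 - 1) by (rewrite <- A3; field; lra).
apply inv_sum_of_gram; auto.
apply (diag_form_gram _ _ _ _ _ _ u1 u2 u3 F12 F13 F23); apply ell_diag_form_self; auto.
Qed.

Theorem theorem1 (a b : R) (hb : 0 < b) (hab : b < a) :
  let delta := sqrt (a ^ 4 - a ^ 2 * b ^ 2 + b ^ 4) in
  forall (P1 P2 P3 : pt) (r Rc : R),
    billiard3 a b P1 P2 P3 ->
    is_inradius P1 P2 P3 r ->
    is_circumradius P1 P2 P3 Rc ->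
    r / Rc = 2 * (delta - b ^ 2) * (a ^ 2 - delta) / (a ^ 2 - b ^ 2) ^ 2.
Proof.
intros delta P1 P2 P3 r Rc Horbit Hr HR.
assert (ha : a <> 0) by lra; assert (hb0 : b <> 0) by lra.
rewrite (carnot P1 P2 P3 r Rc (proj1 Horbit) Hr HR).
pose proof Horbit as (_ & E1 & E2 & E3 & _).
destruct (on_ellipse_ell_pt a b P1 ha hb0 E1) as (u1 & U1 & ->).
destruct (on_ellipse_ell_pt a b P2 ha hb0 E2) as (u2 & U2 & ->).
destruct (on_ellipse_ell_pt a b P3 ha hb0 E3) as (u3 & U3 & ->).
destruct (billiard3_cos_angle_sum a b u1 u2 u3 hb hab U1 U2 U3 Horbit) as (K & HK & HF & ->).
apply joachimsthal_sqr_closed_form; assumption.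
Qed.
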